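(* Let $n\ge 2$ and let $P$ be a partial $n$-Metric on a set $X$. Define $d:X\times X\to\mathbb{R}$ by $$d(x,y)=P(y,\langle x\rangle^{n-1})-P(\langle x\rangle^n)+P(x,\langle y\rangle^{n-1})-P(\langle y\rangle^n).$$ Then $d$ is a metric on $X$.
   Context: Notation: $\langle a\rangle^k$ denotes the $k$-tuple $(a,a,\dots,a)$, inserted into the argument list of a function. A partial $n$-Metric on $X$ is a function $P:X^n\to\mathbb{R}$ such that for all $x_1,\dots,x_n,a\in X$: (1) $P(\langle x_1\rangle^n)\le P(\langle x_1\rangle^{n-1},x_2)$; (2) $P(x_1,\dots,x_n)=P(x_{\pi(1)},\dots,x_{\pi(n)})$ for every permutation $\pi$ of $\{1,\dots,n\}$; (3) $P(\langle x_1\rangle^{n-1},x_2)=P(\langle x_1\rangle^n)$ and $P(\langle x_2\rangle^{n-1},x_1)=P(\langle x_2\rangle^n)$ if and only if $x_1=x_2$; (4) $P(x_1,\dots,x_n)\le P(x_1,\dots,x_{n-1},a)+P(\langle a\rangle^{n-1},x_n)-P(\langle a\rangle^n)$. *)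

From Stdlib Require Import Reals List Permutation.
Import ListNotations.
Open Scope R_scope.

(* An n-tuple of X is represented as a list of length n; P : list X -> R is
   only constrained on lists of length n. <a>^k is [repeat a k]. *)
Definition partial_n_metric {X : Type} (n : nat) (P : list X -> R) : Prop :=
  (forall x y : X, P (repeat x n) <= P (repeat x (n - 1)%nat ++ [y])) /\
  (forall l l' : list X, (length l = n)%nat -> Permutation l l' -> P l = P l') /\
  (forall x y : X,
      (P (repeat x (n - 1)%nat ++ [y]) = P (repeat x n) /\
       P (repeat y (n - 1)%nat ++ [x]) = P (repeat y n)) <-> x = y) /\
  (forall (l : list X) (xn a : X), (length l = n - 1)%nat ->
      P (l ++ [xn]) <= P (l ++ [a]) + P (repeat a (n - 1)%nat ++ [xn]) - P (repeat a n)).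

Definition pm_dist {X : Type} (n : nat) (P : list X -> R) (x y : X) : R :=
  P (y :: repeat x (n - 1)%nat) - P (repeat x n) + P (x :: repeat y (n - 1)%nat) - P (repeat y n).

Definition is_metric {X : Type} (d : X -> X -> R) : Prop :=
  (forall x y, 0 <= d x y) /\
  (forall x y, d x y = 0 <-> x = y) /\
  (forall x y, d x y = d y x) /\
  (forall x y z, d x z <= d x y + d y z).

From Stdlib Require Import Reals List Permutation Lra Lia.
Import ListNotations.

(* Split d(x,y) = e(x,y) + e(y,x) with the one-sided excess
   e(x,y) = P(<x>^{n-1}, y) - P(<x>^n). Axiom (1) makes e nonnegative, axiom (3)
   says e(x,y) = e(y,x) = 0 exactly when x = y, and axiom (4) applied to the
   tuple <x>^{n-1}, last entry z and intermediate point y gives e(x,z) <= e(x,y) + e(y,z). Symmetrising these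
   quasi-metric properties yields the metric axioms for d. *)

Section PartialNMetric.

Context {X : Type} {n : nat} {P : list X -> R}.
Hypothesis n_pos : (1 <= n)%nat.
Hypothesis P_pnm : partial_n_metric n P.

Definition excess (x y : X) : R := P (repeat x (n - 1) ++ [y]) - P (repeat x n).

Lemma P_cons_repeat (x y : X) : P (y :: repeat x (n - 1)) = P (repeat x (n - 1) ++ [y]).
Proof.
  destruct P_pnm as [_ [P_perm _]].
  apply P_perm.
  - simpl; rewrite repeat_length; lia.
  - apply Permutation_cons_append.
Qed.

Lemma pm_dist_excess (x y : X) : pm_dist n P x y = excess x y + excess y x.
Proof. unfold pm_dist, excess; rewrite !P_cons_repeat; ring. Qed.

Lemma excess_ge0 (x y : X) : 0 <= excess x y.
Proof. destruct P_pnm as [P_small _]; unfold excess; specialize (P_small x y); lra. Qed.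

Lemma excess_eq0 (x y : X) : excess x y = 0 /\ excess y x = 0 <-> x = y.
Proof.
  destruct P_pnm as [_ [_ [P_sep _]]].
  rewrite <- P_sep; unfold excess; split; intros [Hxy Hyx]; split; lra.
Qed.

Lemma excess_triangle (x y z : X) : excess x z <= excess x y + excess y z.
Proof.
  destruct P_pnm as [_ [_ [_ P_tri]]].
  unfold excess.
  pose proof (P_tri (repeat x (n - 1)) z y (repeat_length x (n - 1))); lra.
Qed.

End PartialNMetric.

Theorem theorem2p13 (X : Type) (n : nat) (P : list X -> R) :
  (2 <= n)%nat -> partial_n_metric n P -> is_metric (pm_dist n P).
Proof.
  intros Hn HP.
  assert (n_pos : (1 <= n)%nat) by lia.
  unfold is_metric; setoid_rewrite (pm_dist_excess n_pos HP).
  split; [|split; [|split]].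
  - intros x y.
    pose proof (excess_ge0 HP x y); pose proof (excess_ge0 HP y x); lra.
  - intros x y; rewrite <- (excess_eq0 HP x y).
    pose proof (excess_ge0 HP x y); pose proof (excess_ge0 HP y x).
    split; [intros; split|intros [-> ->]]; lra.
  - intros x y; ring.
  - intros x y z.
    pose proof (excess_triangle HP x y z); pose proof (excess_triangle HP z y x); lra.
Qed.
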